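(* Let $\mathcal{V}$ be a (left) skew-monoidal category, let $(\mathcal{A},\underline{\mathcal{A}}(-,-),M,j)$ be a skew $\mathcal{V}$-category, and let $(Q,S,\psi)$ be a locally weak $\mathcal{V}$-comonad on it. Then the following data define a skew-enrichment of the category $\mathcal{A}$ over the skew-monoidal category $\mathcal{V}_Q$ (the skew-monoidal structure on $\mathcal{V}$ induced by $Q$): (i) hom functor $(A,B)\mapsto\underline{\mathcal{A}}(SA,B)$; (ii) composition given by the composite $$\underline{\mathcal{A}}(SB,C)\otimes Q\underline{\mathcal{A}}(SA,B)\xrightarrow{1\otimes\psi}\underline{\mathcal{A}}(SB,C)\otimes\underline{\mathcal{A}}(S^2A,SB)\xrightarrow{M}\underline{\mathcal{A}}(S^2A,C)\xrightarrow{\underline{\mathcal{A}}(\delta_A,1)}\underline{\mathcal{A}}(SA,C);$$ (iii) unit given by the composite $I\xrightarrow{j}\underline{\mathcal{A}}(A,A)\xrightarrow{\underline{\mathcal{A}}(\varepsilon_A,1)}\underline{\mathcal{A}}(SA,A)$.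
   Context: A (left) skew-monoidal category $(\mathcal{V},\otimes,I,a,l,r)$ is a category with a functor $\otimes$, an object $I$, and natural transformations (not necessarily invertible) $a\colon (X\otimes Y)\otimes Z\to X\otimes(Y\otimes Z)$, $l\colon I\otimes X\to X$, $r\colon X\to X\otimes I$, satisfying: $(1\otimes a)\circ a\circ(a\otimes 1)=a\circ a$; $l_{X\otimes Y}\circ a_{I,X,Y}=l_X\otimes 1_Y$; $(1_X\otimes l_Y)\circ a_{X,I,Y}\circ(r_X\otimes 1_Y)=1$; $a_{X,Y,I}\circ r_{X\otimes Y}=1_X\otimes r_Y$; $l_I\circ r_I=1_I$. A skew $\mathcal{V}$-category (equivalently, a skew-enrichment of the category $\mathcal{A}$ over $\mathcal{V}$) consists of a category $\mathcal{A}$, a functor $\underline{\mathcal{A}}(-,-)\colon\mathcal{A}^{\mathrm{op}}\times\mathcal{A}\to\mathcal{V}$, and natural transformations $M\colon\underline{\mathcal{A}}(B,C)\otimes\underline{\mathcal{A}}(A,B)\to\underline{\mathcal{A}}(A,C)$, $j\colon I\to\underline{\mathcal{A}}(A,A)$ (natural with respect to morphisms of $\mathcal{A}$) with $M\circ(1\otimes M)\circ a=M\circ(M\otimes 1)$, $M\circ(j\otimes 1)=l$, $M\circ(1\otimes j)\circ r=1$. A monoidal comonad $(Q,\varphi,\varphi_0,\delta,\varepsilon)$ on $\mathcal{V}$ is a comonad $(Q,\delta\colon Q\to Q^2,\varepsilon\colon Q\to 1)$ whose functor is monoidal via natural maps $\varphi\colon QX\otimes QY\to Q(X\otimes Y)$,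 $\varphi_0\colon I\to QI$, and whose $\delta,\varepsilon$ are monoidal natural transformations. The induced skew-monoidal structure $\mathcal{V}_Q$ on $\mathcal{V}$ has tensor $X\otimes QY$, unit $I$, associativity $(X\otimes QY)\otimes QZ\xrightarrow{a}X\otimes(QY\otimes QZ)\xrightarrow{1\otimes(1\otimes\delta)}X\otimes(QY\otimes Q^2Z)\xrightarrow{1\otimes\varphi}X\otimes Q(Y\otimes QZ)$, left unit $I\otimes QX\xrightarrow{l}QX\xrightarrow{\varepsilon}X$, and right unit $X\xrightarrow{r}X\otimes I\xrightarrow{1\otimes\varphi_0}X\otimes QI$. A locally weak $\mathcal{V}$-comonad $(Q,S,\psi)$ on a skew $\mathcal{V}$-category $\underline{\mathcal{A}}$ consists of a monoidal comonad $(Q,\varphi,\varphi_0,\delta,\varepsilon)$ on $\mathcal{V}$, a comonad $(S,\delta,\varepsilon)$ on the category $\mathcal{A}$, and a natural transformation $\psi\colon Q\underline{\mathcal{A}}(A,B)\to\underline{\mathcal{A}}(SA,SB)$, such that: (1) $\psi\circ QM\circ\varphi=M\circ(\psi\otimes\psi)\colon Q\underline{\mathcal{A}}(B,C)\otimes Q\underline{\mathcal{A}}(A,B)\to\underline{\mathcal{A}}(SA,SC)$; (2) $\underline{\mathcal{A}}(\delta_A,1)\circ\psi\circ Q\psi\circ\delta=\underline{\mathcal{A}}(1,\delta_B)\circ\psi\colon Q\underline{\mathcal{A}}(A,B)\to\underline{\mathcal{A}}(SA,S^2B)$; (3) $\psi\circ Qj\circ\varphi_0=j\colon I\to\underline{\mathcal{A}}(SA,SA)$;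 (4) $\underline{\mathcal{A}}(1,\varepsilon_B)\circ\psi=\underline{\mathcal{A}}(\varepsilon_A,1)\circ\varepsilon\colon Q\underline{\mathcal{A}}(A,B)\to\underline{\mathcal{A}}(SA,B)$. *)

Set Implicit Arguments.
Unset Strict Implicit.

Record Category := {
  ob :> Type;
  hom : ob -> ob -> Type;
  idm : forall X, hom X X;
  comp : forall X Y Z, hom Y Z -> hom X Y -> hom X Z;
  comp_idl : forall X Y (f : hom X Y), comp (idm Y) f = f;
  comp_idr : forall X Y (f : hom X Y), comp f (idm X) = f;
  comp_assoc : forall X Y Z W (h : hom Z W) (g : hom Y Z) (f : hom X Y),
      comp h (comp g f) = comp (comp h g) f }.

Arguments hom {c} X Y.
Arguments idm {c} X.
Arguments comp {c X Y Z} g f.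

Notation "g ∘ f" := (comp g f) (at level 40, left associativity).

Record Functor (C D : Category) := {
  fob :> C -> D;
  fmap : forall X Y, hom X Y -> hom (fob X) (fob Y);
  fmap_id : forall X, fmap (idm X) = idm (fob X);
  fmap_comp : forall X Y Z (g : hom Y Z) (f : hom X Y),
      fmap (g ∘ f) = fmap g ∘ fmap f }.

Arguments fmap {C D} f0 {X Y} _.

Record SkewData (C : Category) := {
  tens : C -> C -> C;
  tensm : forall X X' Y Y', hom X X' -> hom Y Y' -> hom (tens X Y) (tens X' Y');
  sunit : C;
  sa : forall X Y Z, hom (tens (tens X Y) Z) (tens X (tens Y Z));
  sl : forall X, hom (tens sunit X) X;
  sr : forall X, hom X (tens X sunit) }.

Arguments tens {C} s X Y.
Arguments tensm {C} s {X X' Y Y'} f g.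
Arguments sunit {C} s.
Arguments sa {C} s X Y Z.
Arguments sl {C} s X.
Arguments sr {C} s X.

Definition is_skew_monoidal (C : Category) (V : SkewData C) : Prop :=
  (forall X Y : C, tensm V (idm X) (idm Y) = idm (tens V X Y)) /\
  (forall (X X' X'' Y Y' Y'' : C) (f : hom X X') (f' : hom X' X'')
          (g : hom Y Y') (g' : hom Y' Y''),
      tensm V (f' ∘ f) (g' ∘ g) = tensm V f' g' ∘ tensm V f g) /\
  (forall (X X' Y Y' Z Z' : C) (f : hom X X') (g : hom Y Y') (h : hom Z Z'),
      sa V X' Y' Z' ∘ tensm V (tensm V f g) h
      = tensm V f (tensm V g h) ∘ sa V X Y Z) /\
  (forall (X X' : C) (f : hom X X'),
      f ∘ sl V X = sl V X' ∘ tensm V (idm (sunit V)) f) /\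
  (forall (X X' : C) (f : hom X X'),
      sr V X' ∘ f = tensm V f (idm (sunit V)) ∘ sr V X) /\
  (forall W X Y Z : C,
      tensm V (idm W) (sa V X Y Z) ∘ sa V W (tens V X Y) Z
        ∘ tensm V (sa V W X Y) (idm Z)
      = sa V W X (tens V Y Z) ∘ sa V (tens V W X) Y Z) /\
  (forall X Y : C,
      sl V (tens V X Y) ∘ sa V (sunit V) X Y = tensm V (sl V X) (idm Y)) /\
  (forall X Y : C,
      tensm V (idm X) (sl V Y) ∘ sa V X (sunit V) Y ∘ tensm V (sr V X) (idm Y)
      = idm (tens V X Y)) /\
  (forall X Y : C,
      sa V X Y (sunit V) ∘ sr V (tens V X Y) = tensm V (idm X) (sr V Y)) /\
  (sl V (sunit V) ∘ sr V (sunit V) = idm (sunit V)).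

Definition is_skew_enrichment (C : Category) (V : SkewData C) (A : Category)
    (H : A -> A -> C)
    (Hm : forall (X X' Y Y' : A), hom X' X -> hom Y Y' -> hom (H X Y) (H X' Y'))
    (M : forall X Y Z : A, hom (tens V (H Y Z) (H X Y)) (H X Z))
    (j : forall X : A, hom (sunit V) (H X X)) : Prop :=
  (forall X Y : A, Hm X X Y Y (idm X) (idm Y) = idm (H X Y)) /\
  (forall (X X' X'' Y Y' Y'' : A) (f : hom X' X) (f' : hom X'' X')
          (g : hom Y Y') (g' : hom Y' Y''),
      Hm X X'' Y Y'' (f ∘ f') (g' ∘ g) = Hm X' X'' Y' Y'' f' g' ∘ Hm X X' Y Y' f g) /\
  (forall (X X' Y Z : A) (f : hom X' X),
      Hm X X' Z Z f (idm Z) ∘ M X Y Z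
      = M X' Y Z ∘ tensm V (idm (H Y Z)) (Hm X X' Y Y f (idm Y))) /\
  (forall (X Y Z Z' : A) (g : hom Z Z'),
      Hm X X Z Z' (idm X) g ∘ M X Y Z
      = M X Y Z' ∘ tensm V (Hm Y Y Z Z' (idm Y) g) (idm (H X Y))) /\
  (forall (X Y Y' Z : A) (g : hom Y Y'),
      M X Y Z ∘ tensm V (Hm Y' Y Z Z g (idm Z)) (idm (H X Y))
      = M X Y' Z ∘ tensm V (idm (H Y' Z)) (Hm X X Y Y' (idm X) g)) /\
  (forall (X X' : A) (f : hom X X'),
      Hm X X X X' (idm X) f ∘ j X = Hm X' X X' X' f (idm X') ∘ j X') /\
  (forall W X Y Z : A,
      M W Y Z ∘ tensm V (idm (H Y Z)) (M W X Y) ∘ sa V (H Y Z) (H X Y) (H W X)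
      = M W X Z ∘ tensm V (M X Y Z) (idm (H W X))) /\
  (forall X Y : A, M X Y Y ∘ tensm V (j Y) (idm (H X Y)) = sl V (H X Y)) /\
  (forall X Y : A,
      M X X Y ∘ tensm V (idm (H X Y)) (j X) ∘ sr V (H X Y) = idm (H X Y)).

Definition is_monoidal_comonad (C : Category) (V : SkewData C) (Q : Functor C C)
    (dQ : forall X : C, hom (Q X) (Q (Q X)))
    (eQ : forall X : C, hom (Q X) X)
    (phi : forall X Y : C, hom (tens V (Q X) (Q Y)) (Q (tens V X Y)))
    (phi0 : hom (sunit V) (Q (sunit V))) : Prop :=
  (forall (X Y : C) (f : hom X Y), fmap Q (fmap Q f) ∘ dQ X = dQ Y ∘ fmap Q f) /\
  (forall (X Y : C) (f : hom X Y), f ∘ eQ X = eQ Y ∘ fmap Q f) /\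
  (forall X : C, fmap Q (dQ X) ∘ dQ X = dQ (Q X) ∘ dQ X) /\
  (forall X : C, eQ (Q X) ∘ dQ X = idm (Q X)) /\
  (forall X : C, fmap Q (eQ X) ∘ dQ X = idm (Q X)) /\
  (forall (X X' Y Y' : C) (f : hom X X') (g : hom Y Y'),
      fmap Q (tensm V f g) ∘ phi X Y = phi X' Y' ∘ tensm V (fmap Q f) (fmap Q g)) /\
  (forall X Y Z : C,
      fmap Q (sa V X Y Z) ∘ phi (tens V X Y) Z ∘ tensm V (phi X Y) (idm (Q Z))
      = phi X (tens V Y Z) ∘ tensm V (idm (Q X)) (phi Y Z) ∘ sa V (Q X) (Q Y) (Q Z)) /\
  (forall X : C,
      fmap Q (sl V X) ∘ phi (sunit V) X ∘ tensm V phi0 (idm (Q X)) = sl V (Q X)) /\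
  (forall X : C,
      phi X (sunit V) ∘ tensm V (idm (Q X)) phi0 ∘ sr V (Q X) = fmap Q (sr V X)) /\
  (forall X Y : C,
      dQ (tens V X Y) ∘ phi X Y
      = fmap Q (phi X Y) ∘ phi (Q X) (Q Y) ∘ tensm V (dQ X) (dQ Y)) /\
  (dQ (sunit V) ∘ phi0 = fmap Q phi0 ∘ phi0) /\
  (forall X Y : C, eQ (tens V X Y) ∘ phi X Y = tensm V (eQ X) (eQ Y)) /\
  (eQ (sunit V) ∘ phi0 = idm (sunit V)).

Arguments is_monoidal_comonad {C} V Q dQ eQ phi phi0.

Definition is_comonad (A : Category) (S : Functor A A)
    (dS : forall X : A, hom (S X) (S (S X)))
    (eS : forall X : A, hom (S X) X) : Prop :=
  (forall (X Y : A) (f : hom X Y), fmap S (fmap S f) ∘ dS X = dS Y ∘ fmap S f) /\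
  (forall (X Y : A) (f : hom X Y), f ∘ eS X = eS Y ∘ fmap S f) /\
  (forall X : A, fmap S (dS X) ∘ dS X = dS (S X) ∘ dS X) /\
  (forall X : A, eS (S X) ∘ dS X = idm (S X)) /\
  (forall X : A, fmap S (eS X) ∘ dS X = idm (S X)).

Arguments is_comonad {A} S dS eS.

Definition is_locally_weak_comonad (C : Category) (V : SkewData C) (A : Category)
    (H : A -> A -> C)
    (Hm : forall (X X' Y Y' : A), hom X' X -> hom Y Y' -> hom (H X Y) (H X' Y'))
    (M : forall X Y Z : A, hom (tens V (H Y Z) (H X Y)) (H X Z))
    (j : forall X : A, hom (sunit V) (H X X))
    (Q : Functor C C) (dQ : forall X : C, hom (Q X) (Q (Q X)))
    (eQ : forall X : C, hom (Q X) X)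
    (phi : forall X Y : C, hom (tens V (Q X) (Q Y)) (Q (tens V X Y)))
    (phi0 : hom (sunit V) (Q (sunit V)))
    (S : Functor A A) (dS : forall X : A, hom (S X) (S (S X)))
    (eS : forall X : A, hom (S X) X)
    (psi : forall X Y : A, hom (Q (H X Y)) (H (S X) (S Y))) : Prop :=
  is_monoidal_comonad V Q dQ eQ phi phi0 /\
  is_comonad S dS eS /\
  (forall (X X' Y Y' : A) (f : hom X' X) (g : hom Y Y'),
      Hm (S X) (S X') (S Y) (S Y') (fmap S f) (fmap S g) ∘ psi X Y
      = psi X' Y' ∘ fmap Q (Hm X X' Y Y' f g)) /\
  (* (1) *)
  (forall X Y Z : A,
      psi X Z ∘ fmap Q (M X Y Z) ∘ phi (H Y Z) (H X Y)
      = M (S X) (S Y) (S Z) ∘ tensm V (psi Y Z) (psi X Y)) /\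
  (* (2) *)
  (forall X Y : A,
      Hm (S (S X)) (S X) (S (S Y)) (S (S Y)) (dS X) (idm (S (S Y)))
        ∘ psi (S X) (S Y) ∘ fmap Q (psi X Y) ∘ dQ (H X Y)
      = Hm (S X) (S X) (S Y) (S (S Y)) (idm (S X)) (dS Y) ∘ psi X Y) /\
  (* (3) *)
  (forall X : A, psi X X ∘ fmap Q (j X) ∘ phi0 = j (S X)) /\
  (* (4) *)
  (forall X Y : A,
      Hm (S X) (S X) (S Y) Y (idm (S X)) (eS Y) ∘ psi X Y
      = Hm X (S X) Y Y (eS X) (idm Y) ∘ eQ (H X Y)).

Arguments is_locally_weak_comonad {C} V {A} H Hm M j Q dQ eQ phi phi0 S dS eS psi.

Definition VQ (C : Category) (V : SkewData C) (Q : Functor C C)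
    (dQ : forall X : C, hom (Q X) (Q (Q X)))
    (eQ : forall X : C, hom (Q X) X)
    (phi : forall X Y : C, hom (tens V (Q X) (Q Y)) (Q (tens V X Y)))
    (phi0 : hom (sunit V) (Q (sunit V))) : SkewData C :=
  {| tens := fun X Y => tens V X (Q Y);
     tensm := fun X X' Y Y' f g => tensm V f (fmap Q g);
     sunit := sunit V;
     sa := fun X Y Z =>
       tensm V (idm X) (phi Y (Q Z))
       ∘ tensm V (idm X) (tensm V (idm (Q Y)) (dQ Z))
       ∘ sa V X (Q Y) (Q Z);
     sl := fun X => eQ X ∘ sl V (Q X);
     sr := fun X => tensm V (idm X) phi0 ∘ sr V X |}.

Definition liftH (C A : Category) (H : A -> A -> C) (S : Functor A A)
  : A -> A -> C := fun X Y => H (S X) Y.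

Definition liftHm (C A : Category) (H : A -> A -> C)
    (Hm : forall (X X' Y Y' : A), hom X' X -> hom Y Y' -> hom (H X Y) (H X' Y'))
    (S : Functor A A) :
    forall (X X' Y Y' : A), hom X' X -> hom Y Y' ->
      hom (liftH H S X Y) (liftH H S X' Y') :=
  fun X X' Y Y' f g => Hm (S X) (S X') Y Y' (fmap S f) g.

Definition liftM (C : Category) (V : SkewData C) (A : Category)
    (H : A -> A -> C)
    (Hm : forall (X X' Y Y' : A), hom X' X -> hom Y Y' -> hom (H X Y) (H X' Y'))
    (M : forall X Y Z : A, hom (tens V (H Y Z) (H X Y)) (H X Z))
    (Q : Functor C C) (S : Functor A A)
    (dS : forall X : A, hom (S X) (S (S X)))
    (psi : forall X Y : A, hom (Q (H X Y)) (H (S X) (S Y))) :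
    forall X Y Z : A,
      hom (tens V (liftH H S Y Z) (Q (liftH H S X Y))) (liftH H S X Z) :=
  fun X Y Z =>
    Hm (S (S X)) (S X) Z Z (dS X) (idm Z)
    ∘ M (S (S X)) (S Y) Z
    ∘ tensm V (idm (H (S Y) Z)) (psi (S X) Y).

Definition liftj (C : Category) (V : SkewData C) (A : Category)
    (H : A -> A -> C)
    (Hm : forall (X X' Y Y' : A), hom X' X -> hom Y Y' -> hom (H X Y) (H X' Y'))
    (j : forall X : A, hom (sunit V) (H X X))
    (S : Functor A A) (eS : forall X : A, hom (S X) X) :
    forall X : A, hom (sunit V) (liftH H S X X) :=
  fun X => Hm X (S X) X X (eS X) (idm X) ∘ j X.

Arguments is_skew_enrichment {C} V {A} H Hm M j.
Arguments VQ {C} V Q dQ eQ phi phi0.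
Arguments liftH {C A} H S _ _.
Arguments liftHm {C A} H Hm S X X' Y Y' f g.
Arguments liftM {C} V {A} H Hm M Q S dS psi X Y Z.
Arguments liftj {C} V {A} H Hm j S eS X.


(* Every axiom for the lifted data reduces to the corresponding axiom of the
   skew V-category once psi is moved across composites.  Naturality of psi
   and axiom (1) let psi pass through composition; in the associativity law
   the comultiplication of Q, contributed by the associator of V_Q, meets the
   two copies of psi, and axiom (2) trades it for the comultiplication of S,
   which coassociativity and extranaturality of M then absorb.  The unit laws
   use axioms (3), (4) and the counit laws of S.  From V and Q only
   functoriality of the tensor and naturality of a, l and phi are used; none
   of their coherence axioms is needed. *)

Lemma postcomp_eq2 {C : Category} {X Y Z W : C} {g : hom Y Z} {f : hom X Y}
    {r : hom X Z} (E : g ∘ f = r) (x : hom Z W) :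
  x ∘ g ∘ f = x ∘ r.
Proof. rewrite <- !comp_assoc, E. reflexivity. Qed.

Lemma postcomp_eq3 {C : Category} {X Y Z U W : C} {e : hom Z U} {g : hom Y Z}
    {f : hom X Y} {r : hom X U} (E : e ∘ g ∘ f = r) (x : hom U W) :
  x ∘ e ∘ g ∘ f = x ∘ r.
Proof. rewrite <- E, !comp_assoc. reflexivity. Qed.

Ltac saturate E :=
  lazymatch type of E with
  | forall _ : _, _ => saturate open_constr:(E _)
  | _ => E
  end.

(* Rewrites with an equation whose left side is a composite of two or three
   morphisms occurring anywhere inside a left-associated chain of composites. *)
Ltac chain_rewrite_with E :=
  first [rewrite (postcomp_eq3 E) | rewrite (postcomp_eq2 E) | rewrite E];
  rewrite ?comp_assoc, ?comp_idl, ?comp_idr.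

Tactic Notation "chain_rewrite" open_constr(E) :=
  let E := saturate E in chain_rewrite_with E.
Tactic Notation "chain_rewrite" "<-" open_constr(E) :=
  let E := saturate E in chain_rewrite_with (eq_sym E).

Section LiftedEnrichment.

Context {C : Category} (V : SkewData C) {A : Category}.
Context (H : A -> A -> C)
  (Hm : forall (X X' Y Y' : A), hom X' X -> hom Y Y' -> hom (H X Y) (H X' Y'))
  (M : forall X Y Z : A, hom (tens V (H Y Z) (H X Y)) (H X Z))
  (j : forall X : A, hom (sunit V) (H X X)).
Context (Q : Functor C C) (dQ : forall X : C, hom (Q X) (Q (Q X)))
  (eQ : forall X : C, hom (Q X) X)
  (phi : forall X Y : C, hom (tens V (Q X) (Q Y)) (Q (tens V X Y)))
  (phi0 : hom (sunit V) (Q (sunit V))).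
Context (S : Functor A A) (dS : forall X : A, hom (S X) (S (S X)))
  (eS : forall X : A, hom (S X) X)
  (psi : forall X Y : A, hom (Q (H X Y)) (H (S X) (S Y))).

Local Notation "f ⊗ g" := (tensm V f g) (at level 35).
Local Notation "'𝒜(' f , g ')'" := (Hm _ _ _ _ f g).
Local Notation "1" := (idm _).

Hypothesis tensm_comp : forall {X X' X'' Y Y' Y'' : C} (f : hom X X') (f' : hom X' X'')
    (g : hom Y Y') (g' : hom Y' Y''),
  (f' ∘ f) ⊗ (g' ∘ g) = f' ⊗ g' ∘ f ⊗ g.
Hypothesis sa_natural : forall {X X' Y Y' Z Z' : C} (f : hom X X') (g : hom Y Y')
    (h : hom Z Z'),
  sa V X' Y' Z' ∘ (f ⊗ g) ⊗ h = f ⊗ (g ⊗ h) ∘ sa V X Y Z.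
Hypothesis sl_natural : forall {X X' : C} (f : hom X X'),
  f ∘ sl V X = sl V X' ∘ 1 ⊗ f.

Hypothesis Hm_id : forall X Y : A, Hm X X Y Y (idm X) (idm Y) = idm (H X Y).
Hypothesis Hm_comp : forall {X X' X'' Y Y' Y'' : A} (f : hom X' X) (f' : hom X'' X')
    (g : hom Y Y') (g' : hom Y' Y''),
  𝒜(f ∘ f', g' ∘ g) = 𝒜(f', g') ∘ 𝒜(f, g).
Hypothesis M_natural_l : forall {X X' Y Z : A} (f : hom X' X),
  𝒜(f, idm Z) ∘ M X Y Z = M X' Y Z ∘ 1 ⊗ 𝒜(f, idm Y).
Hypothesis M_natural_r : forall {X Y Z Z' : A} (g : hom Z Z'),
  𝒜(idm X, g) ∘ M X Y Z = M X Y Z' ∘ 𝒜(idm Y, g) ⊗ 1.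
Hypothesis M_extranatural : forall {X Y Y' Z : A} (g : hom Y Y'),
  M X Y Z ∘ 𝒜(g, idm Z) ⊗ 1 = M X Y' Z ∘ 1 ⊗ 𝒜(idm X, g).
Hypothesis j_extranatural : forall {X X' : A} (f : hom X X'),
  𝒜(idm X, f) ∘ j X = 𝒜(f, idm X') ∘ j X'.
Hypothesis M_assoc : forall W X Y Z : A,
  M W Y Z ∘ 1 ⊗ M W X Y ∘ sa V (H Y Z) (H X Y) (H W X) = M W X Z ∘ M X Y Z ⊗ 1.
Hypothesis M_unitl : forall X Y : A, M X Y Y ∘ j Y ⊗ 1 = sl V (H X Y).
Hypothesis M_unitr : forall X Y : A, M X X Y ∘ 1 ⊗ j X ∘ sr V (H X Y) = idm (H X Y).

Hypothesis phi_natural : forall {X X' Y Y' : C} (f : hom X X') (g : hom Y Y'),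
  fmap Q (f ⊗ g) ∘ phi X Y = phi X' Y' ∘ fmap Q f ⊗ fmap Q g.

Hypothesis dS_natural : forall {X Y : A} (f : hom X Y),
  fmap S (fmap S f) ∘ dS X = dS Y ∘ fmap S f.
Hypothesis eS_natural : forall {X Y : A} (f : hom X Y), f ∘ eS X = eS Y ∘ fmap S f.
Hypothesis dS_coassoc : forall X : A, fmap S (dS X) ∘ dS X = dS (S X) ∘ dS X.
Hypothesis eS_dS : forall X : A, eS (S X) ∘ dS X = idm (S X).
Hypothesis S_eS_dS : forall X : A, fmap S (eS X) ∘ dS X = idm (S X).

Hypothesis psi_natural : forall {X X' Y Y' : A} (f : hom X' X) (g : hom Y Y'),
  𝒜(fmap S f, fmap S g) ∘ psi X Y = psi X' Y' ∘ fmap Q 𝒜(f, g).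
Hypothesis psi_M : forall X Y Z : A,
  psi X Z ∘ fmap Q (M X Y Z) ∘ phi (H Y Z) (H X Y)
  = M (S X) (S Y) (S Z) ∘ psi Y Z ⊗ psi X Y.
Hypothesis psi_dQ : forall X Y : A,
  𝒜(dS X, idm (S (S Y))) ∘ psi (S X) (S Y) ∘ fmap Q (psi X Y) ∘ dQ (H X Y)
  = 𝒜(idm (S X), dS Y) ∘ psi X Y.
Hypothesis psi_j : forall X : A, psi X X ∘ fmap Q (j X) ∘ phi0 = j (S X).
Hypothesis psi_eQ : forall X Y : A,
  𝒜(idm (S X), eS Y) ∘ psi X Y = 𝒜(eS X, idm Y) ∘ eQ (H X Y).

Lemma tensm_comp_r {X Y Y' Y'' : C} (g : hom Y Y') (g' : hom Y' Y'') :
  1 ⊗ g' ∘ 1 ⊗ g = idm X ⊗ (g' ∘ g).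
Proof. rewrite <- tensm_comp, comp_idl. reflexivity. Qed.

Lemma tensm_postcomp_r {X X' Y Y' Y'' : C} (f : hom X X') (g : hom Y Y')
    (g' : hom Y' Y'') :
  f ⊗ (g' ∘ g) = 1 ⊗ g' ∘ f ⊗ g.
Proof. rewrite <- tensm_comp, comp_idl. reflexivity. Qed.

Lemma tensm_postcomp_l {X X' X'' Y Y' : C} (f : hom X X') (f' : hom X' X'')
    (g : hom Y Y') :
  (f' ∘ f) ⊗ g = f' ⊗ 1 ∘ f ⊗ g.
Proof. rewrite <- tensm_comp, comp_idl. reflexivity. Qed.

Lemma tensm_split_r {X X' Y Y' : C} (f : hom X X') (g : hom Y Y') :
  f ⊗ g = 1 ⊗ g ∘ f ⊗ 1.
Proof. rewrite <- tensm_comp, comp_idl, comp_idr. reflexivity. Qed.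

Lemma tensm_interchange {X X' Y Y' : C} (f : hom X X') (g : hom Y Y') :
  f ⊗ 1 ∘ 1 ⊗ g = 1 ⊗ g ∘ f ⊗ 1.
Proof. rewrite <- !tensm_comp, !comp_idl, !comp_idr. reflexivity. Qed.

Lemma Hm_comp_l {X X' X'' Y : A} (f : hom X' X) (f' : hom X'' X') :
  𝒜(f', idm Y) ∘ 𝒜(f, 1) = 𝒜(f ∘ f', 1).
Proof. rewrite <- Hm_comp, comp_idl. reflexivity. Qed.

Lemma Hm_interchange {X X' Y Y' : A} (f : hom X' X) (g : hom Y Y') :
  𝒜(f, idm Y') ∘ 𝒜(1, g) = 𝒜(1, g) ∘ 𝒜(f, idm Y).
Proof. rewrite <- !Hm_comp, !comp_idl, !comp_idr. reflexivity. Qed.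

Lemma psi_natural_l {X X' Y : A} (f : hom X' X) :
  𝒜(fmap S f, 1) ∘ psi X Y = psi X' Y ∘ fmap Q 𝒜(f, 1).
Proof. rewrite <- psi_natural, fmap_id. reflexivity. Qed.

Lemma psi_natural_r {X Y Y' : A} (g : hom Y Y') :
  𝒜(1, fmap S g) ∘ psi X Y = psi X Y' ∘ fmap Q 𝒜(1, g).
Proof. rewrite <- psi_natural, fmap_id. reflexivity. Qed.

Local Notation VQ' := (VQ V Q dQ eQ phi phi0).
Local Notation H' := (liftH H S).
Local Notation Hm' := (liftHm H Hm S).
Local Notation M' := (liftM V H Hm M Q S dS psi).
Local Notation j' := (liftj V H Hm j S eS).

Lemma psi_liftM (W X Y : A) :
  psi (S W) Y ∘ fmap Q (M' W X Y) ∘ phi (H (S X) Y) (Q (H (S W) X))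
  ∘ 1 ⊗ dQ (H (S W) X)
  = 𝒜(fmap S (dS W), 1) ∘ M _ _ _
    ∘ psi (S X) Y ⊗ (psi _ _ ∘ fmap Q (psi (S W) X) ∘ dQ _).
Proof.
  unfold liftM. rewrite !fmap_comp, !comp_assoc.
  chain_rewrite <- psi_natural_l.
  chain_rewrite phi_natural. rewrite fmap_id.
  chain_rewrite psi_M.
  chain_rewrite <- tensm_comp.
  chain_rewrite <- tensm_comp.
  reflexivity.
Qed.

Lemma M_psi_comult {U : C} (W X Z : A) (f : hom U (H (S (S X)) Z)) :
  𝒜(dS (S W), 1) ∘ M _ _ _ ∘ f ⊗ (psi _ _ ∘ fmap Q (psi (S W) X) ∘ dQ _)
  = M _ _ _ ∘ (𝒜(dS X, 1) ∘ f) ⊗ psi (S W) X.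
Proof.
  chain_rewrite M_natural_l.
  chain_rewrite <- tensm_comp.
  rewrite psi_dQ, tensm_postcomp_r, comp_assoc.
  chain_rewrite <- M_extranatural.
  chain_rewrite <- tensm_comp.
  reflexivity.
Qed.

Lemma liftM_assoc (W X Y Z : A) :
  M' W Y Z ∘ tensm VQ' 1 (M' W X Y) ∘ sa VQ' _ _ _
  = M' W X Z ∘ tensm VQ' (M' X Y Z) 1.
Proof.
  cbn [VQ tens tensm sa]. unfold liftH. rewrite fmap_id, !comp_assoc.
  chain_rewrite tensm_comp_r. chain_rewrite tensm_comp_r.
  unfold liftM at 1. rewrite ?comp_assoc.
  chain_rewrite tensm_comp_r.
  rewrite psi_liftM, <- !tensm_comp_r, !comp_assoc.
  chain_rewrite <- M_natural_l.
  rewrite Hm_comp_l, dS_coassoc, <- Hm_comp_l, ?comp_assoc.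
  chain_rewrite <- sa_natural.
  chain_rewrite M_assoc.
  chain_rewrite <- tensm_comp.
  chain_rewrite M_psi_comult.
  unfold liftM.
  chain_rewrite <- tensm_comp.
  reflexivity.
Qed.

Lemma liftM_unitl (X Y : A) : M' X Y Y ∘ tensm VQ' (j' Y) 1 = sl VQ' (H' X Y).
Proof.
  cbn [VQ tens tensm sl]. unfold liftM, liftj, liftH. rewrite fmap_id, ?comp_assoc.
  chain_rewrite <- tensm_comp.
  rewrite tensm_postcomp_l, ?comp_assoc.
  chain_rewrite M_extranatural.
  chain_rewrite <- tensm_comp.
  rewrite psi_eQ, (tensm_split_r (j Y)), <- tensm_comp_r, ?comp_assoc.
  chain_rewrite <- tensm_interchange. chain_rewrite <- tensm_interchange.
  chain_rewrite M_unitl.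
  chain_rewrite <- sl_natural. chain_rewrite <- sl_natural.
  rewrite Hm_comp_l, eS_dS, Hm_id, comp_idl.
  reflexivity.
Qed.

Lemma liftM_unitr (X Y : A) : M' X X Y ∘ tensm VQ' 1 (j' X) ∘ sr VQ' (H' X Y) = 1.
Proof.
  cbn [VQ tens tensm sr]. unfold liftM, liftj, liftH. rewrite fmap_comp, !comp_assoc.
  chain_rewrite tensm_comp_r. chain_rewrite tensm_comp_r.
  rewrite <- psi_natural_l, ?comp_assoc.
  chain_rewrite psi_j.
  rewrite <- tensm_comp_r, ?comp_assoc.
  chain_rewrite <- M_natural_l.
  rewrite Hm_comp_l, S_eS_dS, Hm_id, comp_idl.
  apply M_unitr.
Qed.

Theorem lifted_skew_enrichment : is_skew_enrichment VQ' H' Hm' M' j'.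
Proof.
  repeat split; intros; [.. | apply liftM_assoc | apply liftM_unitl | apply liftM_unitr].
  all: unfold liftH, liftHm, liftM, liftj; cbn [VQ tens tensm].
  - rewrite fmap_id. apply Hm_id.
  - rewrite fmap_comp. apply Hm_comp.
  - rewrite !comp_assoc, Hm_comp_l, <- dS_natural, <- Hm_comp_l, ?comp_assoc.
    chain_rewrite M_natural_l.
    chain_rewrite tensm_comp_r.
    rewrite psi_natural_l, <- tensm_comp_r, ?comp_assoc.
    reflexivity.
  - rewrite !fmap_id, !comp_assoc, <- Hm_interchange, ?comp_assoc.
    chain_rewrite M_natural_r.
    chain_rewrite tensm_interchange.
    reflexivity.
  - rewrite !fmap_id, ?comp_assoc.
    chain_rewrite <- tensm_interchange.
    chain_rewrite M_extranatural.
    chain_rewrite tensm_comp_r.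
    rewrite psi_natural_r, <- tensm_comp_r, ?comp_assoc.
    reflexivity.
  - rewrite fmap_id, !comp_assoc, <- Hm_interchange, ?comp_assoc.
    chain_rewrite j_extranatural.
    rewrite !Hm_comp_l, eS_natural.
    reflexivity.
Qed.

End LiftedEnrichment.

Theorem mainTheorem4 (C : Category) (V : SkewData C) (A : Category)
    (H : A -> A -> C)
    (Hm : forall (X X' Y Y' : A), hom X' X -> hom Y Y' -> hom (H X Y) (H X' Y'))
    (M : forall X Y Z : A, hom (tens V (H Y Z) (H X Y)) (H X Z))
    (j : forall X : A, hom (sunit V) (H X X))
    (Q : Functor C C) (dQ : forall X : C, hom (Q X) (Q (Q X)))
    (eQ : forall X : C, hom (Q X) X)
    (phi : forall X Y : C, hom (tens V (Q X) (Q Y)) (Q (tens V X Y)))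
    (phi0 : hom (sunit V) (Q (sunit V)))
    (S : Functor A A) (dS : forall X : A, hom (S X) (S (S X)))
    (eS : forall X : A, hom (S X) X)
    (psi : forall X Y : A, hom (Q (H X Y)) (H (S X) (S Y)))
    (HV : is_skew_monoidal V)
    (HA : is_skew_enrichment V H Hm M j)
    (Hpsi : is_locally_weak_comonad V H Hm M j Q dQ eQ phi phi0 S dS eS psi) :
  is_skew_enrichment (VQ V Q dQ eQ phi phi0) (liftH H S) (liftHm H Hm S)
    (liftM V H Hm M Q S dS psi) (liftj V H Hm j S eS).
Proof.
  destruct HV as (_ & tensm_comp & sa_natural & sl_natural & _).
  destruct HA as (Hm_id & Hm_comp & M_natural_l & M_natural_r & M_extranatural &
    j_extranatural & M_assoc & M_unitl & M_unitr).
  destruct Hpsi as (HQ & HS & psi_natural & psi_M & psi_dQ & psi_j & psi_eQ).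
  destruct HQ as (_ & _ & _ & _ & _ & phi_natural & _).
  destruct HS as (dS_natural & eS_natural & dS_coassoc & eS_dS & S_eS_dS).
  apply lifted_skew_enrichment; assumption.
Qed.
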